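(* Consider a peer-to-peer overlay network (as described in the context) under unlimited adversarial churn. If the overlay topology maintained by an algorithm is not a complete (fully connected) graph, then there does not exist an algorithm that maintains this topology and is resilient against (i.e., correctly handles) unlimited adversarial churn.
   Context: A peer-to-peer overlay network is a set of processes with unique identifiers communicating by asynchronous message passing over FIFO channels of unlimited capacity. A process $a$ is a neighbor of process $b$ if $b$ stores the identifier of $a$ in its memory; a process may send messages (point-to-point only, no broadcast) only to processes whose identifiers it stores, message routing being done by the underlay. An algorithm maintains a particular overlay topology (a graph on the current processes given by the neighbor relation). Since connectivity is maintained only by stored identifiers, once the overlay network becomes disconnected it cannot reconnect; hence a correct algorithm must never let the overlay network become disconnected, whether through its own actions or through churn. Churn is the joining and leaving of processes. In adversarial churn, a leaving process simply exits the overlay network without taking any further algorithm steps (messages in its incoming channels are lost). Churn is unlimited if the number of concurrent churn requests (joins/leaves) is not bounded by any constant, known or unknown to the algorithm; in particular, any set of processes currently in the overlay network may leave concurrently. A cut-set of a topology is a proper subset of the processes whose removal (together with incident edges) disconnects the network. *)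

From Stdlib Require Import List Relation_Operators.
From HB Require Import structures.
From mathcomp Require Import all_boot finmap.

Set Implicit Arguments.
Unset Strict Implicit.
Unset Printing Implicit Defensive.

Local Open Scope fset_scope.

(* A process only knows the identifiers it stores (plus its
   own), and can learn new identifiers only from received messages. *)
Record algorithm (Id : choiceType) := Algorithm {
  lstate : Type;
  msg : Type;
  msg_ids : msg -> seq Id;
  stored : lstate -> seq Id;
  init : Id -> seq Id -> lstate;
  (* step p s r s' out : process p in local state s, receiving r
     (None = spontaneous/timeout action, Some m = receipt of m), moves to
     local state s' and sends the messages out (destination, message). *)
  step : Id -> lstate -> option msg -> lstate -> seq (Id * msg) -> Prop;
  init_stored : forall x ns y, y != x -> (y \in stored (init x ns)) = (y \in ns);
  step_stored : forall p s r s' out y, step p s r s' out ->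
    y \in stored s' ->
    y = p \/ y \in stored s \/ (exists m, r = Some m /\ y \in msg_ids m);
  step_dest : forall p s r s' out d m, step p s r s' out -> In (d, m) out ->
    d = p \/ d \in stored s \/ (exists m0, r = Some m0 /\ d \in msg_ids m0);
  step_msg_ids : forall p s r s' out d m y, step p s r s' out ->
    In (d, m) out -> y \in msg_ids m ->
    y = p \/ y \in stored s \/ (exists m0, r = Some m0 /\ y \in msg_ids m0)
}.

(* Global configuration: current set of processes, local states, and the
   FIFO channel [chan a b] from process a to process b (unbounded). *)
Record config (Id : choiceType) (A : algorithm Id) := Config {
  procs : {fset Id};
  state : Id -> lstate A;
  chan : Id -> Id -> seq (msg A)
}.

Section Model.
Variables (Id : choiceType) (A : algorithm Id).
Implicit Types (c : config A).

Definition upd_state c (p : Id) (s' : lstate A) : Id -> lstate A :=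
  fun x => if x == p then s' else state c x.

Definition send_out (ch : Id -> Id -> seq (msg A)) (p : Id)
    (out : seq (Id * msg A)) : Id -> Id -> seq (msg A) :=
  fun a b => if a == p then ch a b ++ [seq x.2 | x <- out & x.1 == b]
             else ch a b.

Definition pop_chan (ch : Id -> Id -> seq (msg A)) (q p : Id)
    (rest : seq (msg A)) : Id -> Id -> seq (msg A) :=
  fun a b => if (a == q) && (b == p) then rest else ch a b.

Inductive alg_step : config A -> config A -> Prop :=
| AStepSpont c p s' out :
    p \in procs c -> @step _ A p (state c p) None s' out ->
    alg_step c (Config (procs c) (upd_state c p s') (send_out (chan c) p out))
| AStepRecv c p q m rest s' out :
    p \in procs c -> chan c q p = m :: rest ->
    @step _ A p (state c p) (Some m) s' out ->
    alg_step c (Config (procs c) (upd_state c p s')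
                       (send_out (pop_chan (chan c) q p rest) p out)).

Inductive churn_step : config A -> config A -> Prop :=
| Leave c (L : {fset Id}) :
    L `<=` procs c ->
    churn_step c (Config (procs c `\` L) (state c)
                         (fun a b => if b \in L then [::] else chan c a b)).

Definition any_step c c' := alg_step c c' \/ churn_step c c'.

Definition adjacent c (u v : Id) : Prop :=
  u \in stored (state c v) \/ v \in stored (state c u).

Definition overlay_edge c (u v : Id) : Prop :=
  u \in procs c /\ v \in procs c /\ u != v /\ adjacent c u v.

Definition connected c : Prop :=
  forall u v, u \in procs c -> v \in procs c ->
    clos_refl_trans Id (overlay_edge c) u v.

Definition initial c : Prop :=
  (exists ns : Id -> seq Id, forall x, state c x = @init _ A x (ns x)) /\
  (forall a b, chan c a b = [::]) /\
  connected c.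

End Model.

Definition topology (Id : choiceType) := {fset Id} -> Id -> Id -> Prop.

Definition complete_topology (Id : choiceType) (T : topology Id) : Prop :=
  forall V u v, u \in V -> v \in V -> u != v -> T V u v.

Definition legitimate (Id : choiceType) (A : algorithm Id) (T : topology Id)
    (c : config A) : Prop :=
  forall u v, u \in procs c -> v \in procs c -> u != v ->
    (adjacent c u v <-> T (procs c) u v).

Definition start_config (Id : choiceType) (A : algorithm Id) (T : topology Id)
    (c : config A) : Prop :=
  legitimate T c /\
  exists c0, initial c0 /\ clos_refl_trans _ (@alg_step _ A) c0 c.

Definition maintains_resilient (Id : choiceType) (A : algorithm Id)
    (T : topology Id) : Prop :=
  (forall c0, initial c0 ->
     exists c1, clos_refl_trans _ (@alg_step _ A) c0 c1 /\ legitimate T c1) /\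
  (forall c1 c, start_config T c1 ->
     clos_refl_trans _ (@any_step _ A) c1 c ->
     connected c /\
     exists c', clos_refl_trans _ (@alg_step _ A) c c' /\ legitimate T c').

(* If [T V u v] fails for two distinct processes [u, v] of [V], start from the
   initial configuration in which every process of [V] knows all of [V]. The
   algorithm must reach a configuration realising [T] on [V], where [u] and
   [v] are not adjacent. The adversary then lets all processes but [u] and [v]
   leave at once; since leaving does not touch the memory of the remaining
   processes, the overlay on [{u, v}] has no edge and is disconnected. *)
From HB Require Import structures.
From mathcomp Require Import all_boot finmap.
From Stdlib Require Import Relation_Operators Classical.

Set Implicit Arguments.
Unset Strict Implicit.
Unset Printing Implicit Defensive.

Local Open Scope fset_scope.

Section Overlay.
Variables (Id : choiceType) (A : algorithm Id).
Implicit Types (c : config A) (V L : {fset Id}).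

Lemma alg_steps_procs c c' :
  clos_refl_trans _ (@alg_step _ A) c c' -> procs c' = procs c.
Proof. by elim=> [x y []|//|x y z _ -> _ ->]. Qed.

Definition full_knowledge_config V : config A :=
  Config V (fun x => init A x (enum_fset V)) (fun _ _ => [::]).

Lemma initial_full_knowledge V : initial (full_knowledge_config V).
Proof.
split; first by exists (fun _ => enum_fset V).
split=> // x y xV yV.
have [->|xy] := eqVneq x y; first exact: rt_refl.
apply: rt_step; do 3!split=> //.
by left; rewrite /= init_stored.
Qed.

Lemma churn_step_leave c L : L `<=` procs c ->
  exists c', churn_step c c' /\ procs c' = procs c `\` L /\ state c' = state c.
Proof.
move=> sLc; exists (Config (procs c `\` L) (state c)
  (fun a b => if b \in L then [::] else chan c a b)).
by split; first exact: Leave.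
Qed.

Lemma connected_pair_adjacent c u v :
  procs c = [fset u; v] -> u != v -> connected c -> adjacent c u v.
Proof.
move=> pc uv con.
have uc : u \in procs c by rewrite pc !inE eqxx.
have vc : v \in procs c by rewrite pc !inE eqxx orbT.
suff reach_u a b : clos_refl_trans Id (overlay_edge c) a b -> a = u ->
    b = u \/ adjacent c u v.
  by case: (reach_u u v (con u v uc vc) erefl) => // vu; rewrite vu eqxx in uv.
elim=> [x y [_ [yc [xy adj]]] xu|x xu|x y z _ IH1 _ IH2 xu].
- move: yc xy adj; rewrite pc xu !inE => /orP[/eqP->|/eqP->]; last by right.
  by rewrite eqxx.
- by left.
- by case: (IH1 xu) => [/IH2|]; [|right].
Qed.

End Overlay.

Lemma not_complete_topology (Id : choiceType) (T : topology Id) :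
  ~ complete_topology T ->
  exists V u v, [/\ u \in V, v \in V, u != v & ~ T V u v].
Proof.
move=> ncT; apply: NNPP => noV; apply: ncT => V u v uV vV uv.
by apply: NNPP => nT; apply: noV; exists V, u, v.
Qed.

Theorem theorem1 (Id : choiceType) (T : topology Id) :
  ~ complete_topology T ->
  ~ (exists A : algorithm Id, maintains_resilient A T).
Proof.
move=> /not_complete_topology [V [u [v [uV vV uv nT]]]] [A [build resilient]].
have ic0 := initial_full_knowledge A V.
have [c1 [c0c1 leg1]] := build _ ic0.
have pc1 : procs c1 = V by rewrite (alg_steps_procs c0c1).
have leaving : V `\` [fset u; v] `<=` procs c1 by rewrite pc1 fsubsetDl.
have [c [leave [pc sc]]] := churn_step_leave leaving.
have pair : procs c = [fset u; v].
  by rewrite pc pc1 fsetDK // fsubUset !fsub1set uV vV.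
have [con _] := resilient c1 c (conj leg1 (ex_intro _ _ (conj ic0 c0c1)))
  (rt_step _ _ _ _ (or_intror leave)).
apply: nT; rewrite -pc1; apply/(leg1 u v); rewrite ?pc1 //.
by move: (connected_pair_adjacent pair uv con); rewrite /adjacent sc.
Qed.
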